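(* Let $p$ be a prime, let $\mathcal{F}$ be a saturated fusion system on a finite $p$-group $S$, and let $G$ be a finite group which contains $S$ as a subgroup and realizes $\mathcal{F}$. Consider the square matrix \[ \bigl( |P\backslash G /Q| \bigr)_{P,Q}, \] whose rows and columns are indexed by the $G$-conjugacy classes of subgroups of $S$ and whose $(P,Q)$-entry is the number of $(P,Q)$-double cosets in $G$. Then the rank of this matrix (over $\mathbb{Q}$) is equal to the number of $\mathcal{F}$-conjugacy classes of cyclic subgroups of $S$.
   Context: A fusion system $\mathcal{F}$ on a finite $p$-group $S$ is a category whose objects are the subgroups of $S$ and whose morphisms $P\to Q$ are certain injective group homomorphisms, containing all maps induced by conjugation by elements of $S$ and closed under restriction and inverses of isomorphisms; ''saturated'' is the standard saturation axiom (Sylow-type axioms) of Broto–Levi–Oliver. Two subgroups $P,P'\leq S$ are $\mathcal{F}$-conjugate if there is an isomorphism $P\to P'$ in $\mathcal{F}$. A finite group $G$ containing $S$ (not necessarily as a Sylow subgroup) realizes $\mathcal{F}$ if for all $P,Q\leq S$ the morphisms $P\to Q$ in $\mathcal{F}$ are exactly the maps $u\mapsto gug^{-1}$ for $g\in G$ with $gPg^{-1}\leq Q$. In particular, two subgroups of $S$ are $G$-conjugate iff they are $\mathcal{F}$-conjugate. *)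

From mathcomp Require Import all_boot all_fingroup all_solvable all_algebra.

Set Implicit Arguments.
Unset Strict Implicit.
Unset Printing Implicit Defensive.

Local Open Scope group_scope.

(* Conventions: a morphism P -> Q of a fusion system is encoded as a finite
   function f : {ffun gT -> gT} that is an injective group homomorphism on P
   with f(P) <= Q, and that is the identity outside P (canonical encoding,
   so that two morphisms are equal iff they agree on P). *)

Section FusionDefs.
Variable gT : finGroupType.
Implicit Types (P Q : {set gT}) (f g : {ffun gT -> gT}).

(* c_g restricted to P : u |-> g u g^-1 *)
Definition conj_map P (g : gT) : {ffun gT -> gT} :=
  [ffun u => if u \in P then u ^ g^-1 else u].

Definition restr_map P f : {ffun gT -> gT} :=
  [ffun x => if x \in P then f x else x].

Definition comp_map P f g : {ffun gT -> gT} :=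
  [ffun x => if x \in P then g (f x) else x].

Definition is_hom P Q f : bool :=
  [&& [forall x in P, forall y in P, f (x * y) == f x * f y],
      [forall x in P, forall y in P, (f x == f y) ==> (x == y)],
      f @: P \subset Q &
      [forall x in ~: P, f x == x]].

Definition fusion_system (S : {group gT})
    (hom : {set gT} -> {set gT} -> pred {ffun gT -> gT}) : Prop :=
  [/\
      (forall P Q : {group gT}, P \subset S -> Q \subset S ->
         forall f, hom P Q f -> is_hom P Q f),
      (forall P Q : {group gT}, P \subset S -> Q \subset S ->
         forall s, s \in S -> P :^ s^-1 \subset Q -> hom P Q (conj_map P s)),
      (forall P Q P' Q' : {group gT}, P \subset S -> Q \subset S ->
         P' \subset P -> Q' \subset S ->
         forall f, hom P Q f -> f @: P' \subset Q' -> hom P' Q' (restr_map P' f)),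
      (forall P Q R : {group gT}, P \subset S -> Q \subset S -> R \subset S ->
         forall f g, hom P Q f -> hom Q R g -> hom P R (comp_map P f g)) &
      (forall P Q : {group gT}, P \subset S -> Q \subset S ->
         forall f, hom P Q f -> f @: P = Q ->
         exists2 g, hom Q P g & {in P, forall x, g (f x) = x})].

Definition Fconj (hom : {set gT} -> {set gT} -> pred {ffun gT -> gT}) P Q : bool :=
  [exists f, hom P Q f && (f @: P == Q)].

Definition AutF (hom : {set gT} -> {set gT} -> pred {ffun gT -> gT}) P
  : {set {ffun gT -> gT}} := [set f | hom P P f].

Definition AutS (S : {set gT}) P : {set {ffun gT -> gT}} :=
  [set conj_map P s | s in 'N_S(P)].

Definition fully_centralized (S : {group gT})
    (hom : {set gT} -> {set gT} -> pred {ffun gT -> gT}) (P : {set gT}) : Prop :=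
  forall Q : {group gT}, Q \subset S -> Fconj hom P Q -> #|'C_S(Q)| <= #|'C_S(P)|.

Definition fully_normalized (S : {group gT})
    (hom : {set gT} -> {set gT} -> pred {ffun gT -> gT}) (P : {set gT}) : Prop :=
  forall Q : {group gT}, Q \subset S -> Fconj hom P Q -> #|'N_S(Q)| <= #|'N_S(P)|.

(* N_phi = { g in N_S(P) | phi c_g phi^-1 in Aut_S(phi(P)) }, phi(P) = Q *)
Definition Nphi (S : {set gT}) P Q f : {set gT} :=
  [set g in 'N_S(P) | [exists t in 'N_S(Q),
      [forall x in P, f (x ^ g^-1) == (f x) ^ t^-1]]].

(* Saturation axioms of Broto-Levi-Oliver.  "Aut_S(P) is a Sylow
   p-subgroup of Aut_F(P)": Aut_S(P) is a p-subgroup of Aut_F(P) whose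
   index is prime to p. *)
Definition saturated (p : nat) (S : {group gT})
    (hom : {set gT} -> {set gT} -> pred {ffun gT -> gT}) : Prop :=
  [/\ fusion_system S hom,
      (forall P : {group gT}, P \subset S -> fully_normalized S hom P ->
         [/\ fully_centralized S hom P,
             AutS S P \subset AutF hom P,
             p.-nat #|AutS S P|,
             #|AutS S P| %| #|AutF hom P| &
             ~~ (p %| #|AutF hom P| %/ #|AutS S P|)]) &
      (forall P Q : {group gT}, P \subset S -> Q \subset S ->
         forall f, hom P S f -> f @: P = Q -> fully_centralized S hom Q ->
         exists2 g, hom (Nphi S P Q f) S g & {in P, forall x, g x = f x})].

Definition realizes (G S : {group gT})
    (hom : {set gT} -> {set gT} -> pred {ffun gT -> gT}) : Prop :=
  forall P Q : {group gT}, P \subset S -> Q \subset S ->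
    forall f, hom P Q f =
      [exists g in G, (P :^ g^-1 \subset Q) && (f == conj_map P g)].

Definition subgroups_of (S : {set gT}) : {set {set gT}} :=
  [set P : {set gT} | group_set P && (P \subset S)].

Definition Gclasses (G S : {set gT}) : {set {set {set gT}}} :=
  [set P :^: G | P in subgroups_of S].

Definition class_rep (C : {set {set gT}}) : {set gT} :=
  odflt set0 [pick P in C].

Definition dcoset_count (P Q G : {set gT}) : nat :=
  #|[set (P :* g) * Q | g in G]|.

Definition dc_matrix (G S : {set gT}) : 'M[rat]_(#|Gclasses G S|) :=
  \matrix_(i, j) (dcoset_count (class_rep (enum_val i))
                               (class_rep (enum_val j)) G)%:R%R.

Definition Fclasses_cyclic (S : {set gT})
    (hom : {set gT} -> {set gT} -> pred {ffun gT -> gT}) : {set {set {set gT}}} :=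
  [set [set Q in subgroups_of S | Fconj hom P Q]
     | P in subgroups_of S & cyclic P].

End FusionDefs.

From mathcomp Require Import all_boot all_fingroup all_solvable all_algebra.

Set Implicit Arguments.
Unset Strict Implicit.
Unset Printing Implicit Defensive.

Import GRing.Theory Num.Theory.

(* Counting pairs (g, x) with x in P :&: Q :^ g^-1 gives
     |P\G/Q| |P| |Q| = \sum_(g in G) |P :&: Q :^ g^-1|
                    = \sum_(x in P) |{g in G | <[x]> \subset Q :^ g^-1}|,
   and grouping the x by the G-class [C] of <[x]> factors the double coset
   matrix as A B, with A_(P,[C]) = |{x in P | <[x]> in [C]}| / |P| and
   B_([C],Q) = |{g in G | C \subset Q :^ g^-1}| / |Q|, [C] ranging over the
   G-classes of cyclic subgroups of S.  Restricted to the rows (resp. columns)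
   of cyclic P (resp. Q), both factors are triangular for the order of C with
   nonzero diagonal, so the rank is the number of these classes.  As G
   realizes the fusion system, they are exactly its classes of cyclic
   subgroups. *)

Section TriangularRank.
Local Open Scope ring_scope.
Variable F : fieldType.

Lemma row_free_triangular k (X : 'M[F]_k) (w : 'I_k -> nat) :
  (forall i, X i i != 0) ->
  (forall i j, i != j -> X i j != 0 -> (w i < w j)%N) -> row_free X.
Proof.
move=> Xii Xij; apply: inj_row_free => v vX0; apply/rowP => i0.
rewrite mxE; apply/eqP/negPn/negP => vi0.
have [i vi0' i_min] := @arg_minnP _ i0 (fun i => v 0 i != 0) w vi0.
have := congr1 (fun M : 'rV_k => M 0 i) vX0; rewrite !mxE.
rewrite (bigD1 i) //= big1 ?addr0; first by apply/eqP; rewrite mulf_neq0.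
move=> l l_i; have [->|vl] := eqVneq (v 0 l) 0; first by rewrite mul0r.
have [->|Xli] := eqVneq (X l i) 0; first by rewrite mulr0.
by have := Xij l i l_i Xli; rewrite ltnNge i_min.
Qed.

Lemma mxrank_mxsub_le m n m' n' (f : 'I_m' -> 'I_m) (g : 'I_n' -> 'I_n)
    (M : 'M[F]_(m, n)) :
  (\rank (mxsub f g M) <= \rank M)%N.
Proof.
have -> : mxsub f g M = rowsub f (M *m colsub g 1%:M).
  by apply/matrixP => i j; rewrite mulmx_colsub mulmx1 !mxE.
exact: leq_trans (mxrankS (rowsub_sub _ _)) (mxrankM_maxl _ _).
Qed.

Lemma mxrank_mul_subsquare n k (A : 'M[F]_(n, k)) (B : 'M[F]_(k, n))
    (f : 'I_k -> 'I_n) :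
  row_free (rowsub f A) -> row_free (colsub f B) -> \rank (A *m B) = k.
Proof.
move=> freeA freeB; apply/eqP; rewrite eqn_leq.
rewrite (leq_trans (mxrankM_maxl A B)) ?rank_leq_col //=.
have unitAB : mxsub f f (A *m B) \in unitmx.
  by rewrite mxsub_mul unitmx_mul -!row_free_unit freeA freeB.
by apply: leq_trans (mxrank_mxsub_le f f _); rewrite mxrank_unit.
Qed.

End TriangularRank.

Lemma natf_div_eq0 (F : numFieldType) (m d : nat) :
  ((m%:R / d%:R : F) == 0)%R = (m == 0) || (d == 0).
Proof. by rewrite mulf_eq0 invr_eq0 !pnatr_eq0. Qed.

Lemma partition_sum_nat (T I : finType) (A : {set T}) (in_class : I -> pred T)
    (F : T -> nat) (K : I -> nat) :
  (forall x, x \in A -> exists c0, forall c, in_class c x = (c == c0)) ->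
  (forall x c, x \in A -> in_class c x -> F x = K c) ->
  \sum_(x in A) F x = \sum_c #|[set x in A | in_class c x]| * K c.
Proof.
move=> uniq_class FK.
transitivity (\sum_(x in A) \sum_c in_class c x * K c).
  apply: eq_bigr => x Ax; have [c0 c0E] := uniq_class x Ax.
  rewrite (bigD1 c0) //= big1 ?addn0 => [|c /negbTE c_c0].
    by rewrite c0E eqxx mul1n (FK x c0) // c0E.
  by rewrite c0E c_c0.
rewrite exchange_big /=; apply: eq_bigr => c _; rewrite -big_distrl /= -sum1_card.
congr (_ * _); rewrite big_mkcond [in RHS]big_mkcond; apply: eq_bigr => x _.
by rewrite inE; case: (x \in A).
Qed.

Section DoubleCosets.
Local Open Scope group_scope.
Variable gT : finGroupType.
Implicit Types (P Q G : {group gT}) (C : {set gT}).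

Lemma dcoset_refl P Q g : g \in (P :* g) * Q.
Proof. by apply/mulsgP; exists g 1; rewrite ?rcoset_refl ?group1 ?mulg1. Qed.

Lemma dcoset_transl P Q g h : h \in (P :* g) * Q -> (P :* h) * Q = (P :* g) * Q.
Proof.
case/mulsgP => _ q /rcosetP[a Pa ->] Qq ->.
by rewrite !rcosetM (rcoset_id Pa) -mulgA lcoset_id.
Qed.

Lemma card_dcoset P Q g :
  (#|((P :* g) * Q)%g| * #|P :&: Q :^ g^-1| = #|P| * #|Q|)%N.
Proof.
rewrite -(card_rcoset _ g^-1).
have -> : (P :* g) * Q :* g^-1 = P * (Q :^ g^-1) by rewrite conjsgE invgK !mulgA.
by rewrite -(mul_cardG P (Q :^ g^-1)%G) cardJg.
Qed.

Lemma dcoset_count_mul G P Q : P \subset G -> Q \subset G ->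
  (dcoset_count P Q G * (#|P| * #|Q|) = \sum_(g in G) #|P :&: Q :^ g^-1|)%N.
Proof.
move=> sPG sQG; pose dc g := (P :* g) * Q; rewrite /dcoset_count.
rewrite (partition_big dc (mem [set dc g | g in G])) => [|g Gg]; last first.
  exact: imset_f.
rewrite -sum_nat_const; apply: eq_bigr => _ /imsetP[h Gh ->].
have blockE : [set g in G | dc g == dc h] = dc h.
  apply/setP => g; rewrite inE; apply/andP/idP => [[_ /eqP <-]|hPQg].
    exact: dcoset_refl.
  rewrite /dc (dcoset_transl hPQg) eqxx; split=> //.
  case/mulsgP: hPQg => _ q /rcosetP[a Pa ->] Qq ->.
  by rewrite !groupM // ?(subsetP sPG a Pa) ?(subsetP sQG q Qq).
(* Every term of the block of h is |P| |Q| / |dc h|, by card_dcoset. *)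
have dc_gt0 : 0 < #|dc h| by apply/card_gt0P; exists h; apply: dcoset_refl.
apply/eqP; rewrite -(eqn_pmul2l dc_gt0) big_distrr /= -{1}blockE -sum_nat_const.
apply/eqP/esym/eq_big => [g|g /andP[_ /eqP]]; first by rewrite inE.
by rewrite /dc => <-; apply: card_dcoset.
Qed.

Definition conj_into G C (Q : {set gT}) := [set g in G | C \subset Q :^ g^-1].

Lemma card_conj_intoJ G C Q y :
  y \in G -> #|conj_into G (C :^ y) Q| = #|conj_into G C Q|.
Proof.
move=> Gy; rewrite -[RHS](card_preimset _ (mulgI y)).
by apply: eq_card => g; rewrite !inE groupMl // sub_conjg -conjsgM invMg.
Qed.

Lemma sum_card_capJ G P Q :
  \sum_(g in G) #|P :&: Q :^ g^-1| = \sum_(x in P) #|conj_into G <[x]> Q|.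
Proof.
transitivity (\sum_(g in G) \sum_(x in P) (x \in Q :^ g^-1) : nat).
  apply: eq_bigr => g _; rewrite -sum1_card big_mkcond [RHS]big_mkcond.
  by apply: eq_bigr => x _; rewrite inE; case: (x \in P); case: (x \in _).
rewrite exchange_big; apply: eq_bigr => x _.
rewrite -sum1_card big_mkcond [RHS]big_mkcond; apply: eq_bigr => g _.
by rewrite inE cycle_subG; case: (g \in G); case: (x \in _).
Qed.

End DoubleCosets.

Section ConjugacyClasses.
Local Open Scope group_scope.
Variables (gT : finGroupType) (S G : {group gT}).
Implicit Types (X : {set {set gT}}) (A : {set gT}).

Lemma conjs_class_id A g : g \in G -> (A :^ g) :^: G = A :^: G.
Proof. by move=> Gg; rewrite -!orbitJs; apply/orbit_eqP; apply: mem_orbit. Qed.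

Lemma conjugates_refl A : A \in A :^: G.
Proof. by rewrite -orbitJs orbit_refl. Qed.

Lemma GclassesP X :
  reflect (exists2 P : {group gT}, P \subset S & X = P :^: G)
          (X \in Gclasses G S).
Proof.
apply: (iffP imsetP) => [[A /[!inE] /andP[gA sAS] ->]|[P sPS ->]].
  by exists (Group gA).
by exists (P : {set gT}); rewrite // inE groupP.
Qed.

Lemma Gclass_eq X A : X \in Gclasses G S -> A \in X -> X = A :^: G.
Proof. by case/GclassesP=> P _ -> /imsetP[g Gg ->]; rewrite conjs_class_id. Qed.

Lemma class_rep_in X : X \in Gclasses G S -> class_rep X \in X.
Proof.
case/GclassesP=> P _ ->; rewrite /class_rep; case: pickP => [//|noP].
by have := noP P; rewrite conjugates_refl.
Qed.

Lemma class_repE X : X \in Gclasses G S -> X = class_rep X :^: G.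
Proof. by move=> XG; apply: Gclass_eq (class_rep_in XG). Qed.

Lemma class_rep_conj X : X \in Gclasses G S ->
  exists2 P : {group gT}, P \subset S & exists2 g, g \in G & class_rep X = P :^ g.
Proof.
move=> XG; have := class_rep_in XG.
by case/GclassesP: XG => P sPS -> /imsetP[g Gg ->]; exists P => //; exists g.
Qed.

Lemma class_rep_group X : S \subset G -> X \in Gclasses G S ->
  exists2 H : {group gT}, class_rep X = H & H \subset G.
Proof.
move=> sSG /class_rep_conj[P sPS [g Gg ->]]; exists (P :^ g)%G => //.
exact: conj_subG Gg (subset_trans sPS sSG).
Qed.

Lemma cyclic_class_rep X (H : {group gT}) :
  X \in Gclasses G S -> (H : {set gT}) \in X -> cyclic (class_rep X) = cyclic H.
Proof.
move=> XG HX; have := class_rep_in XG.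
by rewrite (Gclass_eq XG HX) => /imsetP[g _ ->]; rewrite cyclicJ.
Qed.

Lemma cycle_Gclass X x :
  X \in Gclasses G S -> x \in class_rep X -> <[x]> :^: G \in Gclasses G S.
Proof.
case/class_rep_conj=> P sPS [g Gg ->] xPg.
rewrite -(conjgKV g x) cycleJ conjs_class_id //; apply/GclassesP.
by exists <[x ^ g^-1]>%G; rewrite // cycle_subG (subsetP sPS) // -mem_conjg.
Qed.

End ConjugacyClasses.

Definition cyclic_Gclasses (gT : finGroupType) (G S : {set gT}) :=
  [set X in Gclasses G S | cyclic (class_rep X)].

Section DoubleCosetMatrix.
Local Open Scope group_scope.
Variables (gT : finGroupType) (S G : {group gT}).
Hypothesis sSG : S \subset G.

Let n := #|Gclasses G S|.
Let rep (i : 'I_n) := class_rep (enum_val i).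
Let cyc_idx := [set i : 'I_n | cyclic (rep i)].
Let k := #|cyc_idx|.
Let idx (c : 'I_k) : 'I_n := enum_val c.
Let cls c := enum_val (idx c).
Let crep c := rep (idx c).

Let cls_Gclass c : cls c \in Gclasses G S. Proof. exact: enum_valP. Qed.

Let crep_cyclic c : cyclic (crep c).
Proof. by have := enum_valP c; rewrite inE. Qed.

Let crep_in_cls c : crep c \in cls c.
Proof. exact: class_rep_in (cls_Gclass c). Qed.

Let cls_inj : injective cls.
Proof. by move=> c c' /enum_val_inj/enum_val_inj. Qed.

Let crep_in_cls_eq c c' : crep c \in cls c' -> c = c'.
Proof.
move=> cc'; apply: cls_inj.
by rewrite (Gclass_eq (cls_Gclass c') cc') -(class_repE (cls_Gclass c)).
Qed.

Let cycle_cls i x :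
  x \in rep i -> exists c0, forall c, (<[x]> \in cls c) = (c == c0).
Proof.
move=> x_i; have YG := cycle_Gclass (enum_valP i) x_i.
have x_Y := conjugates_refl G <[x]>.
have i0C : enum_rank_in YG (<[x]> :^: G) \in cyc_idx.
  by rewrite inE /rep enum_rankK_in // (cyclic_class_rep YG x_Y) cycle_cyclic.
exists (enum_rank_in i0C (enum_rank_in YG (<[x]> :^: G))) => c.
apply/idP/eqP => [xc|->]; last by rewrite /cls /idx !enum_rankK_in.
by apply: cls_inj; rewrite (Gclass_eq (cls_Gclass c) xc) /cls /idx !enum_rankK_in.
Qed.

Let gen_count i c := #|[set x in rep i | <[x]> \in cls c]|.
Let fix_count c j := #|conj_into G (crep c) (rep j)|.

Let rep_group i : exists2 H : {group gT}, rep i = H & H \subset G.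
Proof. exact: class_rep_group sSG (enum_valP i). Qed.

Let dcoset_count_classes i j :
  (dcoset_count (rep i) (rep j) G * (#|rep i| * #|rep j|) =
    \sum_c gen_count i c * fix_count c j)%N.
Proof.
have [P eP sPG] := rep_group i; have [Q eQ sQG] := rep_group j.
rewrite /gen_count /fix_count eP eQ dcoset_count_mul // sum_card_capJ.
apply: partition_sum_nat => [x Px|x c Px].
  by apply: (@cycle_cls i); rewrite eP.
rewrite (class_repE (cls_Gclass c)) => /imsetP[y Gy ->].
by rewrite card_conj_intoJ.
Qed.

Let rep_gt0 i : 0 < #|rep i|.
Proof. by have [P -> _] := rep_group i; apply: cardG_gt0. Qed.

Let card_cls c A : A \in cls c -> #|A| = #|crep c|.
Proof.
by rewrite (class_repE (cls_Gclass c)) => /imsetP[y _ ->]; rewrite cardJg.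
Qed.

Let gen_mx : 'M[rat]_(n, k) :=
  \matrix_(i, c) ((gen_count i c)%:R / #|rep i|%:R)%R.
Let fix_mx : 'M[rat]_(k, n) :=
  \matrix_(c, j) ((fix_count c j)%:R / #|rep j|%:R)%R.

Let dc_matrix_factor : dc_matrix G S = (gen_mx *m fix_mx)%R.
Proof.
apply/matrixP => i j; rewrite !mxE.
have nz_ij : ((#|rep i| * #|rep j|)%:R : rat) != 0%R.
  by rewrite pnatr_eq0 muln_eq0 negb_or -!lt0n !rep_gt0.
apply: (mulIf nz_ij); rewrite -natrM dcoset_count_classes natr_sum mulr_suml.
by apply: eq_bigr => c _; rewrite !mxE mulf_div -!natrM divfK.
Qed.

Let row_free_gen : row_free (rowsub idx gen_mx).
Proof.
rewrite row_free_unit -unitmx_tr -row_free_unit.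
apply: (@row_free_triangular _ _ _ (fun c => #|crep c|)) => [c|c c' c_c'].
  rewrite !mxE natf_div_eq0 negb_or -!lt0n rep_gt0 andbT.
  have [x crep_x] := cyclicP (crep_cyclic c).
  apply/card_gt0P; exists x.
  by rewrite inE -/(crep c) crep_x cycle_id -crep_x crep_in_cls.
rewrite !mxE natf_div_eq0 negb_or -lt0n.
case/andP=> /card_gt0P[x] /[!inE] /andP[x_c' xc] _.
have [H crepH _] : exists2 H : {group gT}, crep c' = H & H \subset G.
  exact: rep_group.
have sxH : <[x]> \subset H by rewrite cycle_subG -crepH.
rewrite -(card_cls xc) ltn_neqAle crepH (subset_leq_card sxH) andbT.
apply: contra_neq c_c' => xH; apply/esym/crep_in_cls_eq.
suff xHE : <[x]> = H :> {set gT} by rewrite crepH -xHE.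
by apply/eqP; rewrite eqEcard sxH xH leqnn.
Qed.

Let row_free_fix : row_free (colsub idx fix_mx).
Proof.
apply: (@row_free_triangular _ _ _ (fun c => #|crep c|)) => [c|c c' c_c'].
  rewrite !mxE natf_div_eq0 negb_or -!lt0n rep_gt0 andbT.
  by apply/card_gt0P; exists 1; rewrite inE group1 invg1 conjsg1 subxx.
rewrite !mxE natf_div_eq0 negb_or -lt0n.
case/andP=> /card_gt0P[g] /[!inE] /andP[Gg sub_cc'] _.
have le_cc' : #|crep c| <= #|crep c'|.
  by rewrite -(cardJg (crep c') g^-1) subset_leq_card.
rewrite ltn_neqAle le_cc' andbT; apply: contra_neq c_c' => eq_cc'.
apply: crep_in_cls_eq; suff -> : crep c = crep c' :^ g^-1.
  by rewrite (class_repE (cls_Gclass c')) imset_f ?groupV.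
by apply/eqP; rewrite eqEcard sub_cc' cardJg eq_cc' leqnn.
Qed.

Let card_cyclic_Gclasses : #|cyclic_Gclasses G S| = k.
Proof.
rewrite /k -(card_imset _ enum_val_inj); apply: eq_card => X.
apply/idP/imsetP => [/[!inE] /andP[XG cycX]|[i /[!inE] cyc_i ->]].
  by exists (enum_rank_in XG X); rewrite ?inE /rep enum_rankK_in.
by rewrite enum_valP.
Qed.

Lemma rank_dc_matrix : \rank (dc_matrix G S) = #|cyclic_Gclasses G S|.
Proof.
rewrite card_cyclic_Gclasses dc_matrix_factor.
exact: mxrank_mul_subsquare row_free_gen row_free_fix.
Qed.

End DoubleCosetMatrix.

Section Realization.
Local Open Scope group_scope.
Variables (gT : finGroupType) (S G : {group gT}).
Variable hom : {set gT} -> {set gT} -> pred {ffun gT -> gT}.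
Hypothesis realG : realizes G S hom.

Lemma conj_map_im (P : {set gT}) g : conj_map P g @: P = P :^ g^-1.
Proof. by apply: eq_in_imset => u Pu; rewrite ffunE Pu. Qed.

Lemma Fconj_class (P Q : {group gT}) : P \subset S -> Q \subset S ->
  Fconj hom P Q = (gval Q \in P :^: G).
Proof.
move=> sPS sQS; apply/existsP/imsetP => [[f /andP[]]|[y Gy eQ]].
  rewrite realG // => /existsP[g /and3P[Gg _ /eqP ->]] /eqP <-.
  by exists g^-1; rewrite ?groupV // conj_map_im.
exists (conj_map P y^-1); rewrite realG // eQ conj_map_im invgK eqxx andbT.
by apply/existsP; exists y^-1; rewrite groupV Gy invgK eqxx subxx.
Qed.

Lemma Fclass_eq (P : {group gT}) : P \subset S ->
  [set Q in subgroups_of S | Fconj hom P Q] = (P :^: G) :&: subgroups_of S.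
Proof.
move=> sPS; apply/setP => Q; rewrite !inE [RHS]andbC.
apply: andb_id2l => /andP[gQ sQS].
exact: (Fconj_class (Q := Group gQ) sPS sQS).
Qed.

Lemma card_Fclasses_cyclic : #|Fclasses_cyclic S hom| = #|cyclic_Gclasses G S|.
Proof.
have -> : Fclasses_cyclic S hom =
    (fun X => X :&: subgroups_of S) @: cyclic_Gclasses G S.
  apply/setP => Y; apply/imsetP/imsetP => [|[X]].
    case=> P /[!inE] /andP[/andP[gP sPS] cycP] ->.
    have XG : P :^: G \in Gclasses G S by apply/GclassesP; exists (Group gP).
    exists (P :^: G); last exact: (Fclass_eq (P := Group gP) sPS).
    by rewrite inE XG (cyclic_class_rep (H := Group gP) XG) ?conjugates_refl.
  move=> /[!inE] /andP[XG cycX] ->; have /GclassesP[P sPS XP] := XG.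
  exists (gval P); last by rewrite (Fclass_eq sPS) XP.
  by rewrite !inE groupP sPS -(cyclic_class_rep XG) // XP conjugates_refl.
apply: card_in_imset => X Y /[!inE] /andP[XG _] /andP[YG _] eqXY.
have /GclassesP[P sPS XP] := XG.
have PX : gval P \in X by rewrite XP conjugates_refl.
have : gval P \in Y :&: subgroups_of S by rewrite -eqXY inE PX inE groupP.
by rewrite inE => /andP[PY _]; rewrite (Gclass_eq XG PX) (Gclass_eq YG PY).
Qed.

End Realization.

Local Open Scope group_scope.

Theorem theorem1p2 (gT : finGroupType) (p : nat) (S G : {group gT})
    (hom : {set gT} -> {set gT} -> pred {ffun gT -> gT}) :
  prime p -> p.-group S -> S \subset G ->
  saturated p S hom -> realizes G S hom ->
  \rank (dc_matrix G S) = #|Fclasses_cyclic S hom|.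
Proof.
move=> _ _ sSG _ realG.
by rewrite rank_dc_matrix // (card_Fclasses_cyclic realG).
Qed.
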